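(* Let $(\pi_\rho,V_\rho)$ be an irreducible unitary representation of $Spin(n)$ and $V_\rho\otimes\mathbf{R}^n=\bigoplus_{k=0}^N V_{\lambda_k}$ its orthogonal decomposition into irreducible submodules. Then for every $k$, every $u\in\mathbf{R}^n$ and every orthonormal basis $\{e_i\}_{i=1}^n$ of $\mathbf{R}^n$, $$-\frac14\sum_{i=1}^n p^\rho_{\lambda_k}(e_i)\,\pi_\rho([e_i,u])=m(\lambda_k)\,p^\rho_{\lambda_k}(u),$$ where $[e_i,u]=e_iu-ue_i\in\mathfrak{spin}(n)$ is computed in $Cl_n$.
   Context: $Cl_n$ is the real Clifford algebra of $\mathbf{R}^n$ with $xy+yx=-2\langle x,y\rangle$; $\mathfrak{spin}(n)=\mathrm{span}\{[e_k,e_l]\}\subset Cl_n$, $Spin(n)=\exp\mathfrak{spin}(n)$, $\pi_{\mathrm{Ad}}(g)x=gxg^{-1}$ on $\mathbf{R}^n$, infinitesimally $\pi_{\mathrm{Ad}}(a)x=[a,x]$. $\pi_\rho$ also denotes the infinitesimal representation. $V_\rho\otimes\mathbf{R}^n$ carries $\pi_\rho\otimes\pi_{\mathrm{Ad}}$ and the tensor inner product; its irreducible constituents have multiplicity one and are mutually orthogonal; $\Pi^\rho_{\lambda_k}$ is the orthogonal projection onto $V_{\lambda_k}$, and the Clifford homomorphism is $p^\rho_{\lambda_k}(u)\phi:=\Pi^\rho_{\lambda_k}(\phi\otimes u)$. The conformal weight $m(\lambda_k)$ is the scalar by which the operator $\widehat C=\frac1{32}\sum_{i,j}\pi_\rho([e_i,e_j])\otimes\pi_{\mathrm{Ad}}([e_i,e_j])$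 acts on $V_{\lambda_k}$; explicitly $m(\lambda_k)=\frac12\big(n-\|\delta+\lambda_k\|^2+\|\delta+\rho\|^2-1\big)$, where $\delta$ is half the sum of positive roots and the norm is the standard Euclidean one on weights. *)

(* Complex scalars: an arbitrary numClosedFieldType C
   (e.g. algC or R[i]); real numbers are the elements with [\is Num.real]. *)
From HB Require Import structures.
From mathcomp Require Import all_boot all_order all_algebra.
Set Implicit Arguments. Unset Strict Implicit. Unset Printing Implicit Defensive.
Import Order.TTheory GRing.Theory Num.Theory.
Local Open Scope ring_scope.

Definition real_mx (C : numClosedFieldType) (p q : nat) (A : 'M[C]_(p, q)) : Prop :=
  forall i j, A i j \is Num.real.

Definition adjmx (C : numClosedFieldType) (p q : nat) (A : 'M[C]_(p, q)) : 'M[C]_(q, p) :=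
  (map_mx Num.conj A)^T.

(* so(n): real skew-symmetric n x n matrices.  spin(n) is identified with
   so(n) through the (injective) infinitesimal adjoint representation
   pi_Ad : a |-> [a, .] ; thus pi_Ad is the identity in this model. *)
Definition so_mx (C : numClosedFieldType) (n : nat) (X : 'M[C]_n) : Prop :=
  real_mx X /\ X^T = - X.

(* pi_Ad([x,y]) for x y in R^n, where [x,y] = xy - yx is computed in Cl_n
   with xy + yx = -2<x,y>:  [[x,y], z] = 4(<x,z> y - <y,z> x).
   As a matrix acting on column vectors: 4 (y x^T - x y^T). *)
Definition clif_br (C : numClosedFieldType) (n : nat) (x y : 'cV[C]_n) : 'M[C]_n :=
  (4 : C) *: (y *m x^T - x *m y^T).

Definition std_e (C : numClosedFieldType) (n : nat) (i : 'I_n) : 'cV[C]_n :=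
  delta_mx i 0.

Definition orthonormal_basis (C : numClosedFieldType) (n : nat)
    (e : 'I_n -> 'cV[C]_n) : Prop :=
  (forall i, real_mx (e i)) /\
  (forall i j, (e i)^T *m e j = ((i == j)%:R : C)%:M).

Definition spin_rep (C : numClosedFieldType) (n d : nat)
    (pi : 'M[C]_n -> 'M[C]_d) : Prop :=
  (forall X Y, so_mx X -> so_mx Y -> pi (X + Y) = pi X + pi Y) /\
  (forall (r : C) X, r \is Num.real -> so_mx X -> pi (r *: X) = r *: pi X) /\
  (forall X Y, so_mx X -> so_mx Y ->
     pi (X *m Y - Y *m X) = pi X *m pi Y - pi Y *m pi X).

(* unitary: the infinitesimal action is skew-Hermitian *)
Definition unitary_rep (C : numClosedFieldType) (n d : nat)
    (pi : 'M[C]_n -> 'M[C]_d) : Prop :=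
  forall X, so_mx X -> adjmx (pi X) = - pi X.

Definition irreducible_rep (C : numClosedFieldType) (n d : nat)
    (pi : 'M[C]_n -> 'M[C]_d) : Prop :=
  (0 < d)%N /\
  forall U : {vspace 'cV[C]_d},
    (forall X v, so_mx X -> v \in U -> pi X *m v \in U) ->
    U = 0%VS \/ U = fullv.

(* V (x) R^n is modelled as 'M[C]_(d, n): phi (x) u = phi *m u^T, and
   (A (x) B) M = A *m M *m B^T.  The infinitesimal action of
   pi_rho (x) pi_Ad on it: *)
Definition tens_act (C : numClosedFieldType) (n d : nat)
    (pi : 'M[C]_n -> 'M[C]_d) (X : 'M[C]_n) (M : 'M[C]_(d, n)) : 'M[C]_(d, n) :=
  pi X *m M + M *m X^T.

Definition mx_inner (C : numClosedFieldType) (p q : nat) (M N : 'M[C]_(p, q)) : C :=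
  \sum_(i < p) \sum_(j < q) Num.conj (M i j) * N i j.

Definition invariant_sub (C : numClosedFieldType) (n d : nat)
    (pi : 'M[C]_n -> 'M[C]_d) (U : {vspace 'M[C]_(d, n)}) : Prop :=
  forall X w, so_mx X -> w \in U -> tens_act pi X w \in U.

Definition irreducible_submod (C : numClosedFieldType) (n d : nat)
    (pi : 'M[C]_n -> 'M[C]_d) (W : {vspace 'M[C]_(d, n)}) : Prop :=
  W != 0%VS /\ invariant_sub pi W /\
  forall U : {vspace 'M[C]_(d, n)}, (U <= W)%VS -> invariant_sub pi U ->
    U = 0%VS \/ U = W.

Definition orth_decomp (C : numClosedFieldType) (n d N : nat)
    (pi : 'M[C]_n -> 'M[C]_d) (W : 'I_N.+1 -> {vspace 'M[C]_(d, n)}) : Prop :=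
  (\sum_(k < N.+1) W k)%VS = fullv /\
  (forall k l, k != l -> forall v w, v \in W k -> w \in W l -> mx_inner v w = 0) /\
  (forall k, irreducible_submod pi (W k)).

Definition is_orth_proj (C : numClosedFieldType) (p q : nat)
    (W : {vspace 'M[C]_(p, q)}) (P : 'M[C]_(p, q) -> 'M[C]_(p, q)) : Prop :=
  forall w, P w \in W /\ forall v, v \in W -> mx_inner v (w - P w) = 0.

(* C^ = 1/32 sum_{i,j} pi_rho([e_i,e_j]) (x) pi_Ad([e_i,e_j]) *)
Definition Chat (C : numClosedFieldType) (n d : nat)
    (pi : 'M[C]_n -> 'M[C]_d) (M : 'M[C]_(d, n)) : 'M[C]_(d, n) :=
  (32 : C)^-1 *: \sum_(i < n) \sum_(j < n)
     (pi (clif_br (std_e C i) (std_e C j)) *m M *m (clif_br (std_e C i) (std_e C j))^T).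

Definition clif_hom (C : numClosedFieldType) (n d : nat)
    (P : 'M[C]_(d, n) -> 'M[C]_(d, n)) (u : 'cV[C]_n) (phi : 'cV[C]_d) : 'M[C]_(d, n) :=
  P (phi *m u^T).

(* Since Chat acts by the scalar m k on each W k and the W k are mutually
   orthogonal and span V (x) R^n, Pi k o Chat = m k Pi k on all of V (x) R^n.
   Expanding [e_a, e_b] in the standard basis gives
   Chat (phi (x) u) = -1/4 sum_a pi([e_a, u]) phi (x) e_a, and this sum does not
   depend on the orthonormal basis because sum_i e_i e_i^T = 1.  Applying Pi k
   to it gives the identity. *)

From HB Require Import structures.
From mathcomp Require Import all_boot all_order all_algebra ring.
Import GRing.Theory Num.Theory.
Set Implicit Arguments. Unset Strict Implicit. Unset Printing Implicit Defensive.
Local Open Scope ring_scope.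

Section InnerProduct.
Variables (C : numClosedFieldType) (p q : nat).
Implicit Types v w : 'M[C]_(p, q).

Lemma mx_inner_is_linear v : linear_for *%R (mx_inner v).
Proof.
move=> a x y; rewrite /mx_inner mulr_sumr -big_split; apply: eq_bigr => i _.
rewrite mulr_sumr -big_split; apply: eq_bigr => j _.
by rewrite !mxE mulrDr mulrCA.
Qed.

HB.instance Definition _ v :=
  GRing.isLinear.Build C 'M[C]_(p, q) C *%R (mx_inner v) (mx_inner_is_linear v).

Lemma mx_inner_self_eq0 v : mx_inner v v = 0 -> v = 0.
Proof.
have sq_ge0 i j : 0 <= Num.conj (v i j) * v i j by rewrite mulrC -normCK exprn_ge0.
move=> v0; apply/matrixP => i j; rewrite mxE.
have row0 := psumr_eq0P (fun i _ => sumr_ge0 _ (fun j _ => sq_ge0 i j)) v0 (i := i) isT.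
have := psumr_eq0P (fun j _ => sq_ge0 i j) row0 (i := j) isT.
by rewrite mulrC -normCK => /eqP; rewrite sqrf_eq0 normr_eq0 => /eqP.
Qed.

End InnerProduct.

Section OrthogonalProjection.
Variables (C : numClosedFieldType) (p q : nat).
Variables (W : {vspace 'M[C]_(p, q)}) (P : 'M[C]_(p, q) -> 'M[C]_(p, q)).
Hypothesis orthP : is_orth_proj W P.

Lemma orth_proj_unique x z :
  z \in W -> (forall v, v \in W -> mx_inner v (x - z) = 0) -> P x = z.
Proof.
move=> zW xz_orth; have [PxW Px_orth] := orthP x.
apply/eqP; rewrite -subr_eq0; apply/eqP/mx_inner_self_eq0.
have PxzW : P x - z \in W by rewrite rpredB.
rewrite {2}(_ : P x - z = (x - z) - (x - P x)); last first.
  by rewrite opprB [RHS]addrC -addrA addKr.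
by rewrite linearB /= xz_orth // Px_orth // subrr.
Qed.

Lemma orth_projZ a x : P (a *: x) = a *: P x.
Proof.
have [PxW Px_orth] := orthP x; apply: orth_proj_unique; first by rewrite rpredZ.
by move=> v vW; rewrite -scalerBr linearZ /= Px_orth // mulr0.
Qed.

Lemma orth_proj_sum I (r : seq I) (F : I -> 'M[C]_(p, q)) :
  P (\sum_(i <- r) F i) = \sum_(i <- r) P (F i).
Proof.
apply: orth_proj_unique; first by apply: rpred_sum => i _; case: (orthP (F i)).
move=> v vW; rewrite -sumrB linear_sum big1 //= => i _.
by case: (orthP (F i)) => _ ->.
Qed.

End OrthogonalProjection.

Section OrthogonalDecomposition.
Variables (C : numClosedFieldType) (p q : nat) (I : finType).
Variables (W : I -> {vspace 'M[C]_(p, q)}) (P : I -> 'M[C]_(p, q) -> 'M[C]_(p, q)).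
Hypothesis W_orth : forall k l, k != l ->
  forall v w, v \in W k -> w \in W l -> mx_inner v w = 0.
Hypothesis orthP : forall k, is_orth_proj (W k) (P k).

Lemma orth_proj_component (F : I -> 'M[C]_(p, q)) k :
  (forall l, F l \in W l) -> P k (\sum_l F l) = F k.
Proof.
move=> FW; apply: orth_proj_unique => // v vW.
rewrite (bigD1 k) //= addrAC subrr add0r linear_sum big1 // => l lk.
by rewrite /= (@W_orth k l) // eq_sym.
Qed.

Lemma orth_proj_eigen (T : {additive 'M[C]_(p, q) -> 'M[C]_(p, q)}) (m : I -> C) :
  (\sum_k W k)%VS = fullv -> (forall k w, w \in W k -> T w = m k *: w) ->
  forall k x, P k (T x) = m k *: P k x.
Proof.
move=> W_full T_eigen k x.
have /memv_sumP[xs xsW ->] : x \in (\sum_k W k)%VS by rewrite W_full memvf.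
have {}xsW l : xs l \in W l := xsW l isT.
rewrite (raddf_sum T) !orth_proj_component // => [|l]; first exact: T_eigen.
by rewrite (T_eigen l) // rpredZ.
Qed.

End OrthogonalDecomposition.

Section SkewMatrices.
Variables (C : numClosedFieldType) (n : nat).

Lemma so_mx0 : so_mx (0 : 'M[C]_n).
Proof. by split=> [i j|]; rewrite ?mxE ?rpred0 // trmx0 oppr0. Qed.

Lemma so_mx_lincomb I (r : seq I) (c : I -> C) (X : I -> 'M[C]_n) :
  (forall i, c i \is Num.real) -> (forall i, so_mx (X i)) ->
  so_mx (\sum_(i <- r) c i *: X i).
Proof.
move=> c_real X_so; elim: r => [|i r [IHreal IHskew]].
  by rewrite big_nil; apply: so_mx0.
have [Xi_real Xi_skew] := X_so i; rewrite big_cons; split.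
  by move=> a b; rewrite !mxE rpredD ?rpredM.
by rewrite linearD linearZ /= Xi_skew IHskew scalerN opprD.
Qed.

End SkewMatrices.

Section SpinRepresentation.
Variables (C : numClosedFieldType) (n d : nat) (pi : 'M[C]_n -> 'M[C]_d).
Hypothesis pi_rep : spin_rep pi.

Lemma spin_rep0 : pi 0 = 0.
Proof.
have [_ [piZ _]] := pi_rep.
have -> : (0 : 'M[C]_n) = 0 *: 0 by rewrite scale0r.
by rewrite piZ ?scale0r ?rpred0 //; apply: so_mx0.
Qed.

Lemma spin_repN X : so_mx X -> pi (- X) = - pi X.
Proof.
have [_ [piZ _]] := pi_rep.
by move=> X_so; rewrite -scaleN1r piZ ?scaleN1r // rpredN rpred1.
Qed.

Lemma spin_rep_lincomb I (r : seq I) (c : I -> C) (X : I -> 'M[C]_n) :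
  (forall i, c i \is Num.real) -> (forall i, so_mx (X i)) ->
  pi (\sum_(i <- r) c i *: X i) = \sum_(i <- r) c i *: pi (X i).
Proof.
have [piD [piZ _]] := pi_rep; move=> c_real X_so.
elim: r => [|i r IHr]; first by rewrite !big_nil spin_rep0.
rewrite !big_cons piD ?piZ ?IHr //; last exact: so_mx_lincomb.
have [Xi_real Xi_skew] := X_so i.
by split=> [a b|]; rewrite ?mxE ?rpredM // linearZ /= Xi_skew scalerN.
Qed.

End SpinRepresentation.

Section CliffordBracket.
Variables (C : numClosedFieldType) (n : nat).
Implicit Types x y u : 'cV[C]_n.

Lemma col_sum_std_e x : x = \sum_a x a 0 *: std_e C a.
Proof.
apply: trmx_inj; rewrite {1}[x^T]row_sum_delta linear_sum; apply: eq_bigr => a _.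
by rewrite linearZ /= trmx_delta mxE.
Qed.

Lemma std_e_real (a : 'I_n) : real_mx (std_e C a).
Proof. by move=> i j; rewrite mxE realn. Qed.

Lemma clif_br_anticomm x y : clif_br y x = - clif_br x y.
Proof. by rewrite /clif_br -scalerN opprB. Qed.

Lemma so_clif_br x y : real_mx x -> real_mx y -> so_mx (clif_br x y).
Proof.
move=> x_real y_real; split; last first.
  by rewrite /clif_br linearZ linearB /= !trmx_mul !trmxK -scalerN opprB.
move=> i j; rewrite !mxE rpredM ?realn // rpredB //;
  by apply: rpred_sum => a _; rewrite !mxE rpredM.
Qed.

Lemma clif_br_expandl x y : clif_br x y = \sum_a x a 0 *: clif_br (std_e C a) y.
Proof.
rewrite /clif_br {1 2}[x]col_sum_std_e linear_sum /= mulmx_sumr mulmx_suml -sumrB.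
rewrite scaler_sumr; apply: eq_bigr => a _.
by rewrite linearZ /= -scalemxAr -scalemxAl -scalerBr !scalerA mulrC.
Qed.

Lemma std_e_tr_mul u (a : 'I_n) : (std_e C a)^T *m u = (u a 0)%:M.
Proof.
by rewrite /std_e trmx_delta -rowE; apply/matrixP => i j; rewrite !ord1 !mxE eqxx mulr1n.
Qed.

Lemma clif_br_std_e_mul (a b : 'I_n) u :
  clif_br (std_e C a) (std_e C b) *m u = 4 *: (u a 0 *: std_e C b - u b 0 *: std_e C a).
Proof. by rewrite /clif_br -scalemxAl mulmxBl -!mulmxA !std_e_tr_mul !mul_mx_scalar. Qed.

End CliffordBracket.

Hint Resolve std_e_real : core.

Section OrthonormalFrame.
Variables (C : numClosedFieldType) (n : nat).

Lemma orthonormal_basis_complete (e : 'I_n -> 'cV[C]_n) :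
  orthonormal_basis e -> \sum_i e i *m (e i)^T = 1%:M.
Proof.
case=> _ e_orth; pose E : 'M[C]_n := \matrix_(b, i) e i b 0.
have EtE : E^T *m E = 1%:M.
  apply/matrixP => i j; have /matrixP/(_ 0 0) := e_orth i j.
  by rewrite !mxE eqxx mulr1n => <-; apply: eq_bigr => b _; rewrite !mxE.
rewrite -(mulmx1C EtE); apply/matrixP => b c; rewrite summxE !mxE.
by apply: eq_bigr => i _; rewrite !mxE big_ord1 !mxE.
Qed.

Lemma mulmx_sum_std_e p (v : 'I_n -> 'cV[C]_p) (x : 'cV[C]_n) :
  (\sum_a v a *m (std_e C a)^T) *m x = \sum_a x a 0 *: v a.
Proof.
rewrite mulmx_suml; apply: eq_bigr => a _.
by rewrite -mulmxA std_e_tr_mul mul_mx_scalar.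
Qed.

Lemma orthonormal_frame_sum p (f : 'cV[C]_n -> 'cV[C]_p) (e : 'I_n -> 'cV[C]_n) :
  (forall x, real_mx x -> f x = \sum_a x a 0 *: f (std_e C a)) ->
  orthonormal_basis e ->
  \sum_i f (e i) *m (e i)^T = \sum_a f (std_e C a) *m (std_e C a)^T.
Proof.
move=> f_lin e_on; have [e_real _] := e_on.
under eq_bigr => i _ do rewrite f_lin // -mulmx_sum_std_e -mulmxA.
by rewrite -mulmx_sumr orthonormal_basis_complete // mulmx1.
Qed.

End OrthonormalFrame.

Section CasimirOnTensors.
Variables (C : numClosedFieldType) (n d : nat) (pi : 'M[C]_n -> 'M[C]_d).
Hypothesis pi_rep : spin_rep pi.
Local Notation s := (std_e C).

Lemma spin_rep_clif_br_anticomm x y : real_mx x -> real_mx y ->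
  pi (clif_br y x) = - pi (clif_br x y).
Proof.
move=> x_real y_real.
by rewrite clif_br_anticomm (spin_repN pi_rep) //; apply: so_clif_br.
Qed.

Lemma spin_rep_clif_br_expandl x y : real_mx x -> real_mx y ->
  pi (clif_br x y) = \sum_a x a 0 *: pi (clif_br (s a) y).
Proof.
move=> x_real y_real; rewrite clif_br_expandl (spin_rep_lincomb pi_rep) // => a.
exact: so_clif_br.
Qed.

Lemma Chat_is_linear : linear (Chat pi).
Proof.
move=> a M N; rewrite /Chat scalerA mulrC -scalerA -scalerDr; congr (_ *: _).
rewrite scaler_sumr -big_split; apply: eq_bigr => i _.
rewrite scaler_sumr -big_split; apply: eq_bigr => j _ /=.
by rewrite mulmxDr mulmxDl -scalemxAr -scalemxAl.
Qed.

HB.instance Definition _ :=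
  GRing.isLinear.Build C 'M[C]_(d, n) 'M[C]_(d, n) *:%R (Chat pi) Chat_is_linear.

Lemma Chat_tensor (phi : 'cV[C]_d) (u : 'cV[C]_n) : real_mx u ->
  Chat pi (phi *m u^T) = - 4^-1 *: \sum_a pi (clif_br (s a) u) *m phi *m (s a)^T.
Proof.
move=> u_real.
pose G i j := u i 0 *: (pi (clif_br (s i) (s j)) *m phi *m (s j)^T).
have term i j : pi (clif_br (s i) (s j)) *m (phi *m u^T) *m (clif_br (s i) (s j))^T
    = 4 *: (G i j + G j i).
  rewrite /G mulmxA -mulmxA -trmx_mul clif_br_std_e_mul.
  rewrite !linearZ linearD !linearZ linearN /=.
  rewrite spin_rep_clif_br_anticomm //.
  by rewrite mulmxDr -!scalemxAr mulmxN !mulNmx scalerN opprK.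
have sum_G : \sum_i \sum_j G i j = - \sum_a pi (clif_br (s a) u) *m phi *m (s a)^T.
  rewrite exchange_big -sumrN; apply: eq_bigr => j _ /=.
  rewrite spin_rep_clif_br_anticomm // !mulNmx opprK.
  rewrite spin_rep_clif_br_expandl // !mulmx_suml.
  by apply: eq_bigr => i _; rewrite -!scalemxAl.
(* The (i, j) and (j, i) terms coincide, so 32^-1 * 4 * 2 = 4^-1. *)
rewrite /Chat (eq_bigr _ (fun i _ => eq_bigr _ (fun j _ => term i j))).
under eq_bigr do rewrite -scaler_sumr big_split.
rewrite -scaler_sumr big_split /= [X in _ + X]exchange_big /= sum_G.
by rewrite -opprD -mulr2n -scaler_nat !scalerN !scalerA -scaleNr; congr (_ *: _); field.
Qed.

End CasimirOnTensors.

Theorem lemma3p4 (C : numClosedFieldType) (n d N : nat)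
    (pi : 'M[C]_n -> 'M[C]_d)
    (W : 'I_N.+1 -> {vspace 'M[C]_(d, n)})
    (Pi : 'I_N.+1 -> 'M[C]_(d, n) -> 'M[C]_(d, n))
    (m : 'I_N.+1 -> C) :
  spin_rep pi -> unitary_rep pi -> irreducible_rep pi ->
  orth_decomp pi W ->
  (forall k, is_orth_proj (W k) (Pi k)) ->
  (forall k w, w \in W k -> Chat pi w = m k *: w) ->
  forall (k : 'I_N.+1) (u : 'cV[C]_n) (e : 'I_n -> 'cV[C]_n),
    real_mx u -> orthonormal_basis e ->
    forall phi : 'cV[C]_d,
      - (4 : C)^-1 *: \sum_(i < n) clif_hom (Pi k) (e i) (pi (clif_br (e i) u) *m phi)
      = m k *: clif_hom (Pi k) u phi.
Proof.
move=> pi_rep _ _ [W_full [W_orth _]] orthP Chat_eigen k u e u_real e_on phi.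
have frame_lin x : real_mx x ->
    pi (clif_br x u) *m phi = \sum_a x a 0 *: (pi (clif_br (std_e C a) u) *m phi).
  move=> x_real; rewrite spin_rep_clif_br_expandl // mulmx_suml.
  by apply: eq_bigr => a _; rewrite -scalemxAl.
have /= frame_sum := orthonormal_frame_sum frame_lin e_on.
rewrite /clif_hom -(orth_proj_eigen W_orth orthP W_full Chat_eigen) /= Chat_tensor //.
by rewrite -frame_sum (orth_projZ (orthP k)) (orth_proj_sum (orthP k)).
Qed.
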